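(* Let $\theta \in [0,1]$. Let $\mathfrak{A}$ be a unital $C^*$-algebra with identity $I$, and let $U, V \in \mathfrak{A}$ be unitaries such that $UV = \exp(2\pi i\theta) VU$. Then there exist symmetries $R_1,R_2,R_3,R_4$ in $M_2(\mathfrak{A})$ such that $\exp(\pi i \theta)\begin{bmatrix} I & 0 \\ 0 & I\end{bmatrix} = R_1R_2R_3R_4$.
   Context: A symmetry is a self-adjoint unitary. $M_2(\mathfrak{A})$ denotes the $C^*$-algebra of $2\times 2$ matrices with entries in $\mathfrak{A}$. *)

From HB Require Import structures.
From mathcomp Require Import all_boot all_order all_algebra.
From mathcomp Require Import reals trigo.
From mathcomp.real_closed Require Import complex.
Set Implicit Arguments. Unset Strict Implicit. Unset Printing Implicit Defensive.
Import Order.TTheory GRing.Theory Num.Theory.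
Local Open Scope ring_scope.

Definition expi (R : realType) (t : R) : R[i] := Complex (cos t) (sin t).

Definition is_cstar_algebra (R : realType) (A : algType R[i])
    (star : A -> A) (nrm : A -> R) : Prop :=
  [/\ (forall x y : A, star (x + y) = star x + star y),
      (forall (c : R[i]) (x : A), star (c *: x) = conjc c *: star x),
      (forall x y : A, star (x * y) = star y * star x) &
      (forall x : A, star (star x) = x)] /\
  [/\ (forall x : A, nrm x = 0 -> x = 0),
      (forall x y : A, nrm (x + y) <= nrm x + nrm y),
      (forall (c : R[i]) (x : A), nrm (c *: x) = Normc.normc c * nrm x) &
      (forall x y : A, nrm (x * y) <= nrm x * nrm y)] /\
  ((forall u : nat -> A,
         (forall e : R, 0 < e -> exists N : nat, forall m n : nat,
              (N <= m)%N -> (N <= n)%N -> nrm (u m - u n) < e) ->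
         exists l : A, forall e : R, 0 < e -> exists N : nat, forall n : nat,
              (N <= n)%N -> nrm (u n - l) < e)
  /\ (forall x : A, nrm (star x * x) = nrm x ^+ 2)).

Definition unitary (R : realType) (A : algType R[i]) (star : A -> A) (u : A) :=
  star u * u = 1 /\ u * star u = 1.

Definition mx_star (A : Type) (star : A -> A) (M : 'M[A]_2) : 'M[A]_2 :=
  \matrix_(i < 2, j < 2) star (M j i).

Definition symmetry2 (R : realType) (A : algType R[i]) (star : A -> A)
    (S : 'M[A]_2) :=
  mx_star star S = S /\
  mx_star star S *m S = 1%:M /\ S *m mx_star star S = 1%:M.

From HB Require Import structures.
From mathcomp Require Import all_boot all_order all_algebra.
From mathcomp Require Import reals trigo.
From mathcomp.real_closed Require Import complex.
Import Order.TTheory GRing.Theory Num.Theory.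
Local Open Scope ring_scope.

(* Put l = exp(pi i theta) and W = l VU, a unitary.  Every antidiagonal matrix
   [[0, X], [X*, 0]] with X unitary is a symmetry, and the product of two
   antidiagonal matrices [[0, X], [Y, 0]] [[0, Z], [T, 0]] is diag(XT, YZ).
   Hence the symmetries built from U, 1, V and W multiply to diag(UVW*, U*V*W).
   The commutation relation reads UV = l W, so UVW* = l WW* = l, and
   U*V*W = l (VU)*(VU) = l. *)

Lemma expiD {R : realType} (s t : R) : expi (s + t) = expi s * expi t.
Proof.
rewrite /expi cosD sinD; apply/eqP; rewrite eq_complex /=.
by rewrite eqxx /= addrC.
Qed.

Lemma conjc_expiM {R : realType} (t : R) : conjc (expi t) * expi t = 1.
Proof.
rewrite /expi /=; apply/eqP; rewrite eq_complex /=.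
by rewrite mulNr opprK -!expr2 cos2Dsin2 mulrC mulNr subrr !eqxx.
Qed.

Section TwoByTwo.
Variable A : pzRingType.

Definition antidiag2 (X Y : A) : 'M[A]_2 :=
  \matrix_(i, j) if i == j then 0 else if i == ord0 then X else Y.

Definition diag2 (X Y : A) : 'M[A]_2 :=
  \matrix_(i, j) if i == j then (if i == ord0 then X else Y) else 0.

Ltac case_ord2 i := case: i => [[|[|?]] ?] //=.

Lemma mul_antidiag2 (X Y Z T : A) :
  antidiag2 X Y *m antidiag2 Z T = diag2 (X * T) (Y * Z).
Proof.
apply/matrixP => i j; rewrite !mxE !big_ord_recl big_ord0 !mxE.
by case_ord2 i; case_ord2 j; rewrite ?mul0r ?mulr0 ?addr0 ?add0r.
Qed.

Lemma mul_diag2_antidiag2 (X Y Z T : A) :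
  diag2 X Y *m antidiag2 Z T = antidiag2 (X * Z) (Y * T).
Proof.
apply/matrixP => i j; rewrite !mxE !big_ord_recl big_ord0 !mxE.
by case_ord2 i; case_ord2 j; rewrite ?mul0r ?mulr0 ?addr0 ?add0r.
Qed.

Lemma scalar_mx_diag2 (c : A) : c%:M = diag2 c c.
Proof. by apply/matrixP => i j; rewrite !mxE; case_ord2 i; case_ord2 j. Qed.

Lemma mx_star_antidiag2 (star : A -> A) (X Y : A) :
  star 0 = 0 -> mx_star star (antidiag2 X Y) = antidiag2 (star Y) (star X).
Proof.
by move=> star0; apply/matrixP => i j; rewrite !mxE; case_ord2 i; case_ord2 j.
Qed.

End TwoByTwo.

Arguments antidiag2 {A}.
Arguments diag2 {A}.

Section Involution.
Context {R : realType} {A : algType (R[i])} {star : A -> A}.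
Hypothesis starD : forall x y : A, star (x + y) = star x + star y.
Hypothesis starZ : forall (c : R[i]) (x : A), star (c *: x) = conjc c *: star x.
Hypothesis starM : forall x y : A, star (x * y) = star y * star x.
Hypothesis starK : forall x : A, star (star x) = x.

Lemma star0 : star 0 = 0.
Proof. by apply: (@addrI _ (star 0)); rewrite -starD !addr0. Qed.

Lemma star1 : star 1 = 1.
Proof. by rewrite -[LHS]mulr1 -{2}(starK 1) -starM mulr1 starK. Qed.

Lemma unitary1 : unitary star 1.
Proof. by rewrite /unitary star1 mulr1. Qed.

Lemma unitaryM {u v : A} :
  unitary star u -> unitary star v -> unitary star (u * v).
Proof.
move=> [uKu uuK] [vKv vvK]; rewrite /unitary starM; split.
- by rewrite mulrA -[star v * star u * u]mulrA uKu mulr1.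
- by rewrite mulrA -[u * v * star v]mulrA vvK mulr1.
Qed.

Lemma unitaryZ {c : R[i]} {u : A} :
  conjc c * c = 1 -> unitary star u -> unitary star (c *: u).
Proof.
move=> cKc [uKu uuK]; rewrite /unitary starZ -!scalerAl -!scalerAr !scalerA.
by rewrite [c * _]mulrC cKc uKu uuK scale1r.
Qed.

Lemma symmetry2_antidiag2 {u : A} :
  unitary star u -> symmetry2 star (antidiag2 u (star u)).
Proof.
move=> [uKu uuK]; rewrite /symmetry2 mx_star_antidiag2 ?star0 // starK.
by rewrite mul_antidiag2 uKu uuK -scalar_mx_diag2.
Qed.

End Involution.

Theorem proposition3p10 (R : realType) (theta : R)
    (A : algType R[i]) (star : A -> A) (nrm : A -> R)
    (hA : is_cstar_algebra star nrm)
    (htheta : 0 <= theta <= 1)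
    (U V : A) (hU : unitary star U) (hV : unitary star V)
    (hUV : U * V = expi (2 * pi * theta) *: (V * U)) :
  exists R1 R2 R3 R4 : 'M[A]_2,
    [/\ symmetry2 star R1, symmetry2 star R2, symmetry2 star R3,
        symmetry2 star R4 &
        (expi (pi * theta) *: (1 : A))%:M = R1 *m R2 *m R3 *m R4].
Proof.
case: hA => [[starD starZ starM starK] _].
set l := expi (pi * theta).
set W := l *: (V * U).
have unitVU : unitary star (V * U) := unitaryM starM hV hU.
have unitW : unitary star W := unitaryZ starZ (conjc_expiM (pi * theta)) unitVU.
have UV_lW : U * V = l *: W.
  by rewrite hUV /W scalerA /l -expiD -mulrA mulr2n mulrDl mul1r.
exists (antidiag2 U (star U)), (antidiag2 1 1), (antidiag2 V (star V)),
  (antidiag2 W (star W)).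
split; try exact: (symmetry2_antidiag2 starD starK).
  have := symmetry2_antidiag2 starD starK (unitary1 starM starK).
  by rewrite (star1 starM starK).
rewrite mul_antidiag2 mul_diag2_antidiag2 mul_antidiag2 scalar_mx_diag2 !mulr1.
case: unitW unitVU => [_ WWK] [VUKVU _]; congr diag2.
- by rewrite UV_lW -scalerAl WWK.
- by rewrite /W -scalerAr -starM VUKVU.
Qed.
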